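(* Assume $\lambda_A>0$. Run TD-SVRG with i.i.d. sampling (Algorithm 3) with learning rate $\alpha=1/16$, inner-loop length $M=32/\lambda_A$ (assumed integer), a parameter $c>0$, and in epoch $m\ge1$ an estimation batch size $$n_m=\Big\lceil\frac{4f_e(\tilde\theta_{m-1})+2\sigma^2}{c\,\lambda_A\,(2/3)^{m}}\Big\rceil,\qquad \sigma^2=\sum_{s,s'}\mu(s)P(s,s')\|g_{s,s'}(\theta^* )\|^2.$$ Then there is a constant $C_1$ (independent of $m$) such that for every $m\ge0$, $$\mathbb E[f_e(\tilde\theta_m)]\le\left(\tfrac23\right)^m\big(f_e(\tilde\theta_0)+C_1\big).$$
   Context: Environment setting. Let $\mathcal S$ be a finite state space, $P$ an irreducible aperiodic transition matrix on $\mathcal S$ (induced by a fixed policy) with stationary distribution $\mu$, $\phi:\mathcal S\to\mathbb R^d$ a feature map with $\|\phi(s)\|_2\le1$ for all $s$, $r:\mathcal S\times\mathcal S\to\mathbb R$ a reward function and $\gamma\in[0,1)$. For states $s,s'$ and $\theta\in\mathbb R^d$ let $g_{s,s'}(\theta)=(r(s,s')+\gamma\phi(s')^T\theta-\phi(s)^T\theta)\phi(s)$. Let $A_e=\sum_{s,s'}\mu(s)P(s,s')\phi(s)(\phi(s)-\gamma\phi(s'))^T$ and $b_e=\sum_{s,s'}\mu(s)P(s,s')r(s,s')\phi(s)$; assume $A_e$ is nonsingular and let $\theta^*=A_e^{-1}b_e$. Let $\lambda_A$ be the minimum eigenvalue of $(A_e+A_e^T)/2$. Define $f_e(\theta)=(\theta-\theta^*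 )^TA_e(\theta-\theta^* )$. An i.i.d. sample is a pair $(s,s')$ with $s\sim\mu$ and then $s'\sim P(s,\cdot)$, drawn independently of all other samples. Algorithm 3 (TD-SVRG, i.i.d. sampling): given $\alpha>0$, integer $M\ge1$, batch sizes $n_m$ and initial $\tilde\theta_0$, for epochs $m=1,2,\dots$: set $\tilde\theta=\tilde\theta_{m-1}$; draw $n_m$ i.i.d. samples forming $\mathcal D^m$ and compute $g_m(\tilde\theta)=\frac1{n_m}\sum_{(s,s')\in\mathcal D^m}g_{s,s'}(\tilde\theta)$; set $\theta_0=\tilde\theta$; for $t=1,\dots,M$ draw a fresh i.i.d. sample $(s,s')$, put $v_t=g_{s,s'}(\theta_{t-1})-g_{s,s'}(\tilde\theta)+g_m(\tilde\theta)$, $\theta_t=\theta_{t-1}+\alpha v_t$; finally set $\tilde\theta_m=\theta_{t'}$ with $t'$ uniform on $\{0,\dots,M-1\}$, independent. *)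

From HB Require Import structures.
From mathcomp Require Import all_boot all_order all_algebra.
From mathcomp Require Import reals.
Set Implicit Arguments. Unset Strict Implicit. Unset Printing Implicit Defensive.
Import Order.TTheory GRing.Theory Num.Theory.
Local Open Scope ring_scope.

Section TDSVRG.
Variables (R : realType) (S : finType) (d : nat).
Variables (P : S -> S -> R) (mu : S -> R).
Variables (phi : S -> 'cV[R]_d) (r : S -> S -> R) (gamma : R).

Definition dotv (u v : 'cV[R]_d) : R := (u^T *m v) 0 0.

Fixpoint Pk (k : nat) (s s' : S) : R :=
  match k with
  | 0 => (s == s')%:R
  | k'.+1 => \sum_(u : S) Pk k' s u * P u s'
  end.

Definition stochastic : Prop :=
  (forall s s', 0 <= P s s') /\ (forall s, \sum_(s' : S) P s s' = 1).

Definition irreducible : Prop :=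
  forall s s', exists k, (0 < k)%N /\ 0 < Pk k s s'.

Definition aperiodic : Prop :=
  forall s (p : nat), (1 < p)%N ->
    exists k, [/\ (0 < k)%N, 0 < Pk k s s & ~~ (p %| k)%N].

Definition stationary : Prop :=
  [/\ forall s, 0 <= mu s, \sum_(s : S) mu s = 1
    & forall s', mu s' = \sum_(s : S) mu s * P s s'].

(* probability of an i.i.d. sample (s,s'): s ~ mu, s' ~ P(s,.) *)
Definition wpair (p : S * S) : R := mu p.1 * P p.1 p.2.

Definition gTD (p : S * S) (th : 'cV[R]_d) : 'cV[R]_d :=
  (r p.1 p.2 + gamma * dotv (phi p.2) th - dotv (phi p.1) th) *: phi p.1.

Definition A_e : 'M[R]_d :=
  \sum_(s : S) \sum_(s' : S) (mu s * P s s') *: (phi s *m (phi s - gamma *: phi s')^T).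

Definition b_e : 'cV[R]_d :=
  \sum_(s : S) \sum_(s' : S) (mu s * P s s' * r s s') *: phi s.

Definition theta_star : 'cV[R]_d := invmx A_e *m b_e.

Definition f_e (th : 'cV[R]_d) : R :=
  ((th - theta_star)^T *m A_e *m (th - theta_star)) 0 0.

Definition sigma2 : R :=
  \sum_(s : S) \sum_(s' : S) mu s * P s s' * dotv (gTD (s, s') theta_star) (gTD (s, s') theta_star).

Definition is_min_eigenvalue (A : 'M[R]_d) (lam : R) : Prop :=
  eigenvalue A lam /\ forall l, eigenvalue A l -> lam <= l.

Fixpoint inner_path (alpha : R) (tt gm : 'cV[R]_d) (th : 'cV[R]_d)
    (ws : seq (S * S)) : seq 'cV[R]_d :=
  match ws with
  | [::] => [:: th]
  | p :: ws' => th :: inner_path alpha tt gm (th + alpha *: (gTD p th - gTD p tt + gm)) ws'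
  end.

(* Expectation of h(tilde theta_m) after one epoch of Algorithm 3 with batch
   size n, inner-loop length M, step alpha, started at tilde theta = tt. *)
Definition epochE (alpha : R) (M n : nat) (tt : 'cV[R]_d) (h : 'cV[R]_d -> R) : R :=
  \sum_(D : {ffun 'I_n -> S * S}) (\prod_(i < n) wpair (D i)) *
    (let gm := n%:R^-1 *: \sum_(i < n) gTD (D i) tt in
     \sum_(W : {ffun 'I_M -> S * S}) (\prod_(i < M) wpair (W i)) *
       (M%:R^-1 * \sum_(t < M)
          h (nth 0 (inner_path alpha tt gm tt [seq W i | i <- enum 'I_M]) t))).

(* E[h(tilde theta_m)] when epoch k (k >= 1) uses batch size nb k (tilde theta_{k-1}),
   starting from the deterministic tilde theta_0 = th0. *)
Fixpoint expect_epochs (alpha : R) (M : nat) (nb : nat -> 'cV[R]_d -> nat)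
    (m : nat) (th0 : 'cV[R]_d) (h : 'cV[R]_d -> R) : R :=
  match m with
  | 0 => h th0
  | m'.+1 => expect_epochs alpha M nb m' th0
               (fun th => epochE alpha M (nb m'.+1 th) th h)
  end.

End TDSVRG.

From HB Require Import structures.
From mathcomp Require Import all_boot all_order all_algebra.
From mathcomp Require Import reals.
From mathcomp Require Import ring lra.
From mathcomp Require complex spectral sesquilinear.
Set Implicit Arguments. Unset Strict Implicit. Unset Printing Implicit Defensive.
Import Order.TTheory GRing.Theory Num.Theory.
Local Open Scope ring_scope.

(* With the prescribed batch size every
      epoch gives E f(new) <= 3/5 f(old) + K' (2/3)^m, and unrolling this
      recursion (rate 3/5 < 2/3) proves the theorem with C1 = 10 K'. *)

Module Rayleigh.
Import complex spectral sesquilinear.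

Section NormalMatrix.
Variables (C : numClosedFieldType) (n : nat) (A : 'M[C]_n).
Hypothesis A_normal : A \is normalmx.
Local Notation U := (spectralmx A).
Local Notation sp := (spectral_diag A).

(* Every diagonal entry of the spectral decomposition is an eigenvalue
   (the corresponding row of U is an eigenvector). *)
Lemma spectral_diag_eigenvalue i : eigenvalue A (sp 0 i).
Proof.
have AE : A = invmx U *m diag_mx sp *m U by apply/orthomx_spectralP.
have Uu : U \in unitmx := spectral_unit A.
apply/eigenvalueP; exists (row i U).
  rewrite -row_mul {2}AE !mulmxA mulmxV // mul1mx mul_diag_mx.
  by apply/rowP => j; rewrite !mxE.
apply/eqP => /(congr1 (mulmx^~ (U ^t* )%sesqui)).
rewrite -row_mul (unitarymxP (spectral_unitarymx A)) mul0mx => /rowP /(_ i).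
by rewrite !mxE eqxx /= => /eqP; rewrite oner_eq0.
Qed.

Lemma normal_form_lbound l : (forall i, l <= sp 0 i) ->
  forall y : 'cV[C]_n, l * ((y ^t* )%sesqui *m y) 0 0 <= ((y ^t* )%sesqui *m A *m y) 0 0.
Proof.
move=> sp_ge y.
have AE : A = (U ^t* )%sesqui *m diag_mx sp *m U.
  by rewrite -invmx_unitary ?spectral_unitarymx //; apply/orthomx_spectralP.
have UU : (U ^t* )%sesqui *m U = 1%:M.
  by rewrite -invmx_unitary ?spectral_unitarymx // mulVmx ?spectral_unit.
set z := U *m y.
have zE : (z ^t* )%sesqui = (y ^t* )%sesqui *m (U ^t* )%sesqui.
  by rewrite /z trmx_mul map_mxM.
have -> : (y ^t* )%sesqui *m A *m y = (z ^t* )%sesqui *m diag_mx sp *m z.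
  by rewrite zE [in LHS]AE /z !mulmxA.
have -> : (y ^t* )%sesqui *m y = (z ^t* )%sesqui *m z.
  by rewrite zE /z mulmxA -(mulmxA _ _ U) UU mulmx1.
clearbody z; rewrite mul_mx_diag !mxE big_distrr -subr_ge0 -sumrB /=.
apply: sumr_ge0 => k _; rewrite !mxE.
have -> : (z k 0)^* * sp 0 k * z k 0 - l * ((z k 0)^* * z k 0)
   = (sp 0 k - l) * (z k 0 * (z k 0)^*) by ring.
by rewrite mulr_ge0 ?mul_conjC_ge0 // subr_ge0.
Qed.

End NormalMatrix.

Section RealSymmetric.
Variables (R : rcfType) (n : nat) (H : 'M[R]_n).
Local Notation toC := (real_complex R).

Lemma realC_real (x : R) : (x%:C)%C \is Num.real.
Proof. by apply/complex_realP; exists x. Qed.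

(* For a real symmetric matrix, a lower bound lam on its (real) eigenvalues
   gives  lam |x|^2 <= x^T H x ; proved by complexifying H. *)
Lemma rayleigh_min_eigenvalue (lam : R) : H^T = H ->
  (forall l, eigenvalue H l -> lam <= l) ->
  forall x : 'cV[R]_n, lam * (x^T *m x) 0 0 <= (x^T *m H *m x) 0 0.
Proof.
move=> Hsym Hmin x.
pose HC := map_mx toC H.
have HC_herm : HC \is hermsymmx.
  rewrite qualifE /= expr0 scale1r; apply/eqP/matrixP => i j.
  by rewrite !mxE conj_Creal ?realC_real // -[in LHS]Hsym mxE.
have sp_real i : spectral_diag HC 0 i = ((complex.Re (spectral_diag HC 0 i))%:C)%C.
  by rewrite RRe_real //; have /mxOverP := hermitian_spectral_diag_real HC_herm; apply.
have sp_ge i : toC lam <= spectral_diag HC 0 i.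
  rewrite sp_real lecR; apply: Hmin.
  have := spectral_diag_eigenvalue (hermitian_normalmx HC_herm) i.
  by rewrite sp_real !eigenvalue_root_char -map_char_poly (fmorph_root toC).
pose xC := map_mx toC x.
have xCE : (xC ^t* )%sesqui = xC^T.
  by apply/matrixP => i j; rewrite !mxE conj_Creal ?realC_real.
have := normal_form_lbound (hermitian_normalmx HC_herm) sp_ge xC.
have entryC (B : 'M[R]_1) : (map_mx toC B) 0 0 = toC (B 0 0) by rewrite mxE.
have trC : (map_mx toC x)^T = map_mx toC x^T by apply/matrixP => i j; rewrite !mxE.
by rewrite xCE /xC /HC trC -!map_mxM !entryC -rmorphM lecR.
Qed.

End RealSymmetric.
End Rayleigh.
Export Rayleigh.

Section DotProduct.
Variables (R : realType) (d : nat).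
Implicit Types u v x : 'cV[R]_d.

Lemma dotvE u v : dotv u v = \sum_i u i 0 * v i 0.
Proof. by rewrite /dotv mxE; apply: eq_bigr => i _; rewrite mxE. Qed.

Lemma dotvC u v : dotv u v = dotv v u.
Proof. by rewrite !dotvE; apply: eq_bigr => i _; rewrite mulrC. Qed.

Lemma dotvDr u v x : dotv u (v + x) = dotv u v + dotv u x.
Proof. by rewrite !dotvE -big_split; apply: eq_bigr => i _; rewrite mxE mulrDr. Qed.

Lemma dotvDl u v x : dotv (v + x) u = dotv v u + dotv x u.
Proof. by rewrite dotvC dotvDr !(dotvC u). Qed.

Lemma dotvZr a u v : dotv u (a *: v) = a * dotv u v.
Proof. by rewrite !dotvE mulr_sumr; apply: eq_bigr => i _; rewrite mxE mulrCA. Qed.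

Lemma dotvZl a u v : dotv (a *: v) u = a * dotv v u.
Proof. by rewrite dotvC dotvZr dotvC. Qed.

Lemma dotvNr u v : dotv u (- v) = - dotv u v.
Proof. by rewrite -scaleN1r dotvZr mulN1r. Qed.

Lemma dotvNl u v : dotv (- v) u = - dotv v u.
Proof. by rewrite dotvC dotvNr dotvC. Qed.

Lemma dotvBr u v x : dotv u (v - x) = dotv u v - dotv u x.
Proof. by rewrite dotvDr dotvNr. Qed.

Lemma dotvBl u v x : dotv (v - x) u = dotv v u - dotv x u.
Proof. by rewrite dotvC dotvBr !(dotvC u). Qed.

Lemma dotv_ge0 u : 0 <= dotv u u.
Proof. by rewrite dotvE; apply: sumr_ge0 => i _; rewrite -expr2 sqr_ge0. Qed.

Lemma dotv_sumr (I : finType) u (c : I -> R) (v : I -> 'cV[R]_d) :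
  dotv u (\sum_i c i *: v i) = \sum_i c i * dotv u (v i).
Proof.
rewrite dotvE; under eq_bigr do rewrite summxE mulr_sumr.
rewrite exchange_big /=; apply: eq_bigr => j _.
by rewrite dotvE mulr_sumr; apply: eq_bigr => i _; rewrite mxE mulrCA.
Qed.

Lemma dotv_sum (I J : finType) (u : I -> 'cV[R]_d) (v : J -> 'cV[R]_d) :
  dotv (\sum_i u i) (\sum_j v j) = \sum_i \sum_j dotv (u i) (v j).
Proof.
have dotv_sum1 (K : finType) x (y : K -> 'cV[R]_d) : dotv x (\sum_k y k) = \sum_k dotv x (y k).
  by rewrite -(eq_bigr _ (fun j _ => scale1r (y j))) dotv_sumr; under eq_bigr do rewrite mul1r.
by rewrite dotvC dotv_sum1; under eq_bigr do rewrite dotvC dotv_sum1.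
Qed.

Lemma dotv_expand x u a :
  dotv (x + a *: u) (x + a *: u) = dotv x x + 2 * a * dotv x u + a ^+ 2 * dotv u u.
Proof. by rewrite !dotvDl !dotvDr !dotvZl !dotvZr (dotvC u x); ring. Qed.

Lemma dotv_young (eta : R) u v : 0 < eta ->
  2 * dotv u v <= eta * dotv u u + eta^-1 * dotv v v.
Proof.
move=> eta0; have := dotv_ge0 (eta *: u - v).
rewrite !dotvBl !dotvBr !dotvZl !dotvZr (dotvC v u) => H.
rewrite -(ler_pM2l eta0) mulrDr (mulrA eta eta^-1) mulfV ?gt_eqF // mul1r; lra.
Qed.

Lemma dotv_add_le u v : dotv (u + v) (u + v) <= 2 * dotv u u + 2 * dotv v v.
Proof. have := dotv_ge0 (u - v); rewrite !dotvBl !dotvBr !dotvDl !dotvDr (dotvC v u); lra. Qed.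

End DotProduct.

Section ProductMeasure.
Variables (R : realType) (T : finType) (w : T -> R).

Definition Ew (F : T -> R) : R := \sum_p w p * F p.

Definition Ewn n (F : {ffun 'I_n -> T} -> R) : R :=
  \sum_(D : {ffun 'I_n -> T}) (\prod_i w (D i)) * F D.

Lemma eq_Ew (F G : T -> R) : F =1 G -> Ew F = Ew G.
Proof. by move=> FG; apply: eq_bigr => p _; rewrite FG. Qed.

Lemma eq_Ewn n (F G : {ffun 'I_n -> T} -> R) : F =1 G -> Ewn F = Ewn G.
Proof. by move=> FG; apply: eq_bigr => D _; rewrite FG. Qed.

Lemma EwD F G : Ew (fun p => F p + G p) = Ew F + Ew G.
Proof. by rewrite /Ew -big_split; apply: eq_bigr => p _; rewrite mulrDr. Qed.

Lemma EwZ k F : Ew (fun p => k * F p) = k * Ew F.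
Proof. by rewrite /Ew mulr_sumr; apply: eq_bigr => p _; rewrite mulrCA. Qed.

Lemma EwB F G : Ew (fun p => F p - G p) = Ew F - Ew G.
Proof. by rewrite EwD -mulN1r -EwZ; congr (_ + _); apply: eq_bigr => p _; rewrite mulN1r. Qed.

Lemma EwnD n (F G : {ffun 'I_n -> T} -> R) : Ewn (fun D => F D + G D) = Ewn F + Ewn G.
Proof. by rewrite /Ewn -big_split; apply: eq_bigr => D _; rewrite mulrDr. Qed.

Lemma EwnZ n k (F : {ffun 'I_n -> T} -> R) : Ewn (fun D => k * F D) = k * Ewn F.
Proof. by rewrite /Ewn mulr_sumr; apply: eq_bigr => D _; rewrite mulrCA. Qed.

Lemma Ewn_sum n (I : finType) (F : I -> {ffun 'I_n -> T} -> R) :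
  Ewn (fun D => \sum_x F x D) = \sum_x Ewn (F x).
Proof. by rewrite /Ewn exchange_big; apply: eq_bigr => D _; rewrite mulr_sumr. Qed.

Lemma Ewn_prod n (h : 'I_n -> T -> R) :
  Ewn (fun D => \prod_i h i (D i)) = \prod_i Ew (h i).
Proof.
rewrite /Ewn (bigA_distr_bigA (fun i p => w p * h i p)) /=.
by apply: eq_bigr => D _; rewrite big_split.
Qed.

Hypothesis w_ge0 : forall p, 0 <= w p.
Hypothesis w_sum1 : \sum_p w p = 1.

Lemma Ew_const k : Ew (fun _ => k) = k.
Proof. by rewrite /Ew -mulr_suml w_sum1 mul1r. Qed.

Lemma Ew_le F G : (forall p, F p <= G p) -> Ew F <= Ew G.
Proof. by move=> FG; apply: ler_sum => p _; rewrite ler_wpM2l. Qed.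

Lemma Ew_ge0 F : (forall p, 0 <= F p) -> 0 <= Ew F.
Proof. by move=> F0; apply: sumr_ge0 => p _; rewrite mulr_ge0. Qed.

Lemma Ewn_const n k : Ewn (n := n) (fun _ => k) = k.
Proof.
transitivity (k * Ewn (fun D : {ffun 'I_n -> T} => \prod_i (fun _ _ => 1 : R) i (D i))).
  by rewrite /Ewn mulr_sumr; apply: eq_bigr => D _; rewrite /= big1_eq mulr1 mulrC.
by rewrite (Ewn_prod (fun _ _ => 1)) big1 ?mulr1 // => i _; apply: Ew_const.
Qed.

Lemma Ewn_le n (F G : {ffun 'I_n -> T} -> R) :
  (forall D, F D <= G D) -> Ewn F <= Ewn G.
Proof.
move=> FG; apply: ler_sum => D _; apply: ler_wpM2l => //.
by apply: prodr_ge0 => i _.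
Qed.

Lemma Ewn_marg n (i : 'I_n) (H : T -> R) : Ewn (fun D => H (D i)) = Ew H.
Proof.
pose h k p := if k == i then H p else 1.
have hD (D : {ffun 'I_n -> T}) : \prod_k h k (D k) = H (D i).
  by rewrite (bigD1 i) //= /h eqxx big1 ?mulr1 // => k /negbTE ->.
have hE : \prod_k Ew (h k) = Ew H.
  by rewrite (bigD1 i) //= /h eqxx big1 ?mulr1 // => k /negbTE ->; apply: Ew_const.
by rewrite -hE -(Ewn_prod h); apply: eq_bigr => D _; rewrite hD.
Qed.

Lemma Ewn_indep n (i j : 'I_n) (F G : T -> R) : i != j ->
  Ewn (fun D => F (D i) * G (D j)) = Ew F * Ew G.
Proof.
move=> ij; have ji : (j == i) = false by rewrite eq_sym (negbTE ij).
pose h k p := if k == i then F p else if k == j then G p else 1.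
have hD (D : {ffun 'I_n -> T}) : \prod_k h k (D k) = F (D i) * G (D j).
  rewrite (bigD1 i) //= (bigD1 j) ?ji //= /h eqxx ji eqxx big1 ?mulr1 //.
  by move=> k /andP[/negbTE -> /negbTE ->].
have hE : \prod_k Ew (h k) = Ew F * Ew G.
  rewrite (bigD1 i) //= (bigD1 j) ?ji //= /h eqxx ji eqxx big1 ?mulr1 //.
  by move=> k /andP[/negbTE -> /negbTE ->]; apply: Ew_const.
by rewrite -hE -(Ewn_prod h); apply: eq_bigr => D _; rewrite hD.
Qed.

Definition fcons k (p : T) (W : {ffun 'I_k -> T}) : {ffun 'I_k.+1 -> T} :=
  [ffun i => if unlift ord0 i is Some j then W j else p].

Lemma Ewn_cons k (F : seq T -> R) :
  Ewn (fun W : {ffun 'I_k.+1 -> T} => F [seq W i | i <- enum 'I_k.+1])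
  = Ew (fun p => Ewn (fun W : {ffun 'I_k -> T} => F (p :: [seq W i | i <- enum 'I_k]))).
Proof.
have fcons0 p W : fcons p W ord0 = p by rewrite ffunE unlift_none.
have fconsS p W j : fcons p W (lift ord0 j) = W j by rewrite ffunE liftK.
rewrite /Ewn (reindex (fun pW : T * {ffun 'I_k -> T} => fcons pW.1 pW.2)) /=.
  rewrite -(pair_bigA _ (fun p W => (\prod_i w (fcons p W i)) *
              F [seq fcons p W i | i <- enum 'I_k.+1])) /=.
  apply: eq_bigr => p _; rewrite mulr_sumr; apply: eq_bigr => W _.
  rewrite big_ord_recl enum_ordSl /= !fcons0 -map_comp mulrA.
  by under eq_bigr do rewrite fconsS; under eq_map do rewrite /= fconsS.
apply: onW_bij; exists (fun W : {ffun 'I_k.+1 -> T} => (W ord0, [ffun j => W (lift ord0 j)])).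
  by case=> p W /=; rewrite fcons0; congr pair; apply/ffunP => j; rewrite ffunE fconsS.
move=> W; apply/ffunP => i; rewrite ffunE.
by case: unliftP => [j ->|->]; rewrite ?ffunE.
Qed.

Variable d : nat.
Implicit Types z : T -> 'cV[R]_d.

Definition vmean z : 'cV[R]_d := \sum_p w p *: z p.

Lemma vmean_center z : vmean (fun p => z p - vmean z) = 0.
Proof.
rewrite /vmean; under eq_bigr do rewrite scalerBr.
by rewrite sumrB -scaler_suml w_sum1 scale1r subrr.
Qed.

Lemma Ew_dotv_mean u z : Ew (fun p => dotv u (z p)) = dotv u (vmean z).
Proof. by rewrite /vmean dotv_sumr. Qed.

Lemma Ew_variance z :
  Ew (fun p => dotv (z p - vmean z) (z p - vmean z))
  = Ew (fun p => dotv (z p) (z p)) - dotv (vmean z) (vmean z).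
Proof.
have E p : dotv (z p - vmean z) (z p - vmean z)
   = dotv (z p) (z p) - 2 * dotv (vmean z) (z p) + dotv (vmean z) (vmean z).
  by rewrite !dotvBl !dotvBr (dotvC (z p)); ring.
by under eq_Ew do rewrite E; rewrite EwD EwB EwZ Ew_const Ew_dotv_mean; ring.
Qed.

Lemma dotv_mean_le z : dotv (vmean z) (vmean z) <= Ew (fun p => dotv (z p) (z p)).
Proof.
have := Ew_ge0 (fun p => dotv_ge0 (z p - vmean z)).
by rewrite Ew_variance subr_ge0.
Qed.

(* The empirical mean of n i.i.d. centered vectors has second moment
   E|z|^2 / n: cross terms vanish by independence. *)
Lemma Ewn_iid_mean z n : vmean z = 0 -> (0 < n)%N ->
  Ewn (fun D : {ffun 'I_n -> T} =>
        dotv (n%:R^-1 *: \sum_i z (D i)) (n%:R^-1 *: \sum_i z (D i)))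
  = n%:R^-1 * Ew (fun p => dotv (z p) (z p)).
Proof.
move=> z0 n0; have nz : n%:R != 0 :> R by rewrite pnatr_eq0 -lt0n.
have cross (i j : 'I_n) : i != j -> Ewn (fun D => dotv (z (D i)) (z (D j))) = 0.
  move=> ij; transitivity (\sum_k Ewn (fun D => z (D i) k 0 * z (D j) k 0)).
    by rewrite -Ewn_sum; apply: eq_bigr => D _; rewrite dotvE.
  apply: big1 => k _; rewrite (Ewn_indep (fun p => z p k 0) (fun p => z p k 0) ij).
  have -> : Ew (fun p => z p k 0) = vmean z k 0.
    by rewrite /vmean summxE; apply: eq_bigr => p _; rewrite mxE.
  by rewrite z0 mxE mul0r.
have row (i : 'I_n) :
    \sum_j Ewn (fun D : {ffun 'I_n -> T} => dotv (z (D i)) (z (D j))) = Ew (fun p => dotv (z p) (z p)).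
  rewrite (bigD1 i) //= (Ewn_marg i (fun p => dotv (z p) (z p))) big1 ?addr0 //.
  by move=> j ji; apply: cross; rewrite eq_sym.
transitivity (n%:R^-2 * \sum_i \sum_j Ewn (fun D : {ffun 'I_n -> T} => dotv (z (D i)) (z (D j)))).
  transitivity (Ewn (fun D : {ffun 'I_n -> T} =>
                 n%:R^-2 * \sum_i \sum_j dotv (z (D i)) (z (D j)))).
    apply: eq_bigr => D _; congr (_ * _); rewrite dotvZl dotvZr mulrA -expr2 exprVn.
    by rewrite dotv_sum.
  by rewrite EwnZ Ewn_sum; congr (_ * _); apply: eq_bigr => i _; rewrite Ewn_sum.
under eq_bigr do rewrite row.
rewrite sumr_const card_ord -mulr_natl; field; exact: nz.
Qed.

End ProductMeasure.

Arguments eq_Ew {R T w F} G.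
Arguments eq_Ewn {R T w n F} G.

Section TDSVRGAnalysis.
Variables (R : realType) (S : finType) (d : nat).
Variables (P : S -> S -> R) (mu : S -> R).
Variables (phi : S -> 'cV[R]_d) (r : S -> S -> R) (gamma : R).
Hypothesis P_stochastic : stochastic P.
Hypothesis mu_stationary : stationary P mu.

Local Notation w := (wpair P mu).
Local Notation A := (A_e P mu phi gamma).
Local Notation ths := (theta_star P mu phi r gamma).
Local Notation g := (gTD phi r gamma).
Local Notation f := (f_e P mu phi r gamma).

Lemma wpair_ge0 p : 0 <= w p.
Proof.
by case: P_stochastic => P0 _; case: mu_stationary => mu0 _ _; rewrite mulr_ge0.
Qed.

Lemma sum_pair (V : nmodType) (F : S * S -> V) : \sum_p F p = \sum_s \sum_s' F (s, s').
Proof. by rewrite pair_bigA; apply: eq_bigr => -[]. Qed.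

Lemma wpair_sum1 : \sum_p w p = 1.
Proof.
case: P_stochastic => _ P1; case: mu_stationary => _ mu1 _.
by rewrite sum_pair -mu1; apply: eq_bigr => s _; rewrite /wpair /= -mulr_sumr P1 mulr1.
Qed.

Lemma Ew_stationary (h : S -> R) : Ew w (fun p => h p.2) = Ew w (fun p => h p.1).
Proof.
case: P_stochastic => _ P1; case: mu_stationary => _ _ mu_inv.
rewrite /Ew !sum_pair /wpair /=; transitivity (\sum_s mu s * h s).
  by rewrite exchange_big; apply: eq_bigr => s' _; rewrite -mulr_suml -mu_inv.
by apply: eq_bigr => s _; rewrite -mulr_suml -mulr_sumr P1 mulr1.
Qed.

Definition gTD_lin (p : S * S) (x : 'cV[R]_d) : 'cV[R]_d :=
  (gamma * dotv (phi p.2) x - dotv (phi p.1) x) *: phi p.1.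

Lemma gTD_split p th : g p th = r p.1 p.2 *: phi p.1 + gTD_lin p th.
Proof. by rewrite /gTD /gTD_lin -scalerDl addrA. Qed.

Lemma gTD_linB p x y : gTD_lin p (x - y) = gTD_lin p x - gTD_lin p y.
Proof. by rewrite /gTD_lin -scalerBl !dotvBr; congr (_ *: _); ring. Qed.

Lemma mulmx_1x1 (v : 'cV[R]_d) (B : 'M[R]_1) : v *m B = B 0 0 *: v.
Proof. by apply/matrixP => i j; rewrite !mxE big_ord1 (ord1 j) mulrC. Qed.

Lemma mean_gTD_lin x : vmean w (gTD_lin^~ x) = - (A *m x).
Proof.
rewrite /A_e /vmean mulmx_suml sum_pair -sumrN; apply: eq_bigr => s _.
rewrite mulmx_suml -sumrN; apply: eq_bigr => s' _.
rewrite -scalemxAl -mulmxA mulmx_1x1 /gTD_lin /wpair /=.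
have -> : ((phi s - gamma *: phi s')^T *m x) 0 0
    = dotv (phi s) x - gamma * dotv (phi s') x by rewrite -dotvZl -dotvBl.
by rewrite -scalerN -scaleNr; congr (_ *: (_ *: _)); ring.
Qed.

Hypothesis A_unit : A \in unitmx.

Lemma mean_gTD th : vmean w (g^~ th) = - (A *m (th - ths)).
Proof.
have b_eE : b_e P mu phi r = vmean w (fun p => r p.1 p.2 *: phi p.1).
  by rewrite /b_e /vmean sum_pair; apply: eq_bigr => s _; apply: eq_bigr => s' _; rewrite scalerA.
have -> : vmean w (g^~ th) = b_e P mu phi r + vmean w (gTD_lin^~ th).
  by rewrite b_eE /vmean -big_split; apply: eq_bigr => p _; rewrite gTD_split scalerDr.
by rewrite mean_gTD_lin /theta_star mulmxBr mulKVmx // opprB.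
Qed.

Lemma f_eE th : f th = dotv (th - ths) (A *m (th - ths)).
Proof. by rewrite /f_e /dotv mulmxA. Qed.

Hypothesis phi_le1 : forall s, dotv (phi s) (phi s) <= 1.
Hypotheses (gamma_ge0 : 0 <= gamma) (gamma_lt1 : gamma < 1).

(* Second moment of the linear part: E|g_lin(x)|^2 <= 2 x^T A x.  Uses
   |phi| <= 1, 0 <= gamma < 1 and stationarity (E(phi(s')^T x)^2 = E(phi(s)^T x)^2). *)
Lemma gTD_lin_sq x : Ew w (fun p => dotv (gTD_lin p x) (gTD_lin p x)) <= 2 * dotv x (A *m x).
Proof.
pose a (p : S * S) := dotv (phi p.1) x; pose b (p : S * S) := dotv (phi p.2) x.
have w0 := wpair_ge0.
have stat : Ew w (fun p => b p ^+ 2) = Ew w (fun p => a p ^+ 2).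
  exact: (Ew_stationary (fun s => dotv (phi s) x ^+ 2)).
have Ax : dotv x (A *m x) = Ew w (fun p => a p ^+ 2 - gamma * (a p * b p)).
  rewrite -[A *m x]opprK -mean_gTD_lin dotvNr -Ew_dotv_mean -mulN1r -EwZ.
  apply: eq_bigr => p _; congr (_ * _).
  by rewrite /gTD_lin dotvZr (dotvC x) -/(a p) -/(b p); ring.
have lin_le p : dotv (gTD_lin p x) (gTD_lin p x) <= (gamma * b p - a p) ^+ 2.
  rewrite /gTD_lin dotvZl dotvZr mulrA -expr2 -/(a p) -/(b p).
  by rewrite ler_piMr ?sqr_ge0.
have split_sq p : (gamma * b p - a p) ^+ 2 = 2 * (a p ^+ 2 - gamma * (a p * b p))
    - (1 - gamma ^+ 2) * a p ^+ 2 + gamma ^+ 2 * (b p ^+ 2 - a p ^+ 2) by ring.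
apply: le_trans (Ew_le w0 lin_le) _.
under eq_Ew do rewrite split_sq.
rewrite EwD EwB !EwZ (@EwB _ _ w (fun p => b p ^+ 2)) stat subrr mulr0 addr0 -Ax.
have : 0 <= (1 - gamma ^+ 2) * Ew w (fun p => a p ^+ 2).
  apply: mulr_ge0; first by rewrite subr_ge0 expr_le1 // ltW.
  by apply: (Ew_ge0 w0) => p; apply: sqr_ge0.
lra.
Qed.

Variable lam : R.
Hypothesis lam_min : is_min_eigenvalue ((1 / 2 : R) *: (A + A^T)) lam.

Lemma dotv_A_lbound x : lam * dotv x x <= dotv x (A *m x).
Proof.
case: lam_min => _ lam_le.
have sym : ((1 / 2 : R) *: (A + A^T))^T = (1 / 2 : R) *: (A + A^T).
  by rewrite linearZ /= linearD /= trmxK addrC.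
have := rayleigh_min_eigenvalue sym lam_le x.
have AT : x^T *m A^T *m x = (x^T *m A *m x)^T by rewrite !trmx_mul trmxK mulmxA.
rewrite -scalemxAr -scalemxAl mulmxDr mulmxDl AT /dotv mulmxA.
set q := x^T *m A *m x; set n2 := x^T *m x; clearbody q n2.
rewrite !mxE; lra.
Qed.

Hypothesis lam_gt0 : 0 < lam.

Lemma f_e_ge0 th : 0 <= f th.
Proof. by rewrite f_eE; apply: le_trans (dotv_A_lbound _); rewrite mulr_ge0 ?dotv_ge0 ?ltW. Qed.

Section InnerLoop.
Variables (tt gm : 'cV[R]_d).

Definition svrg_step (al : R) (p : S * S) (th : 'cV[R]_d) : 'cV[R]_d :=
  th + al *: (g p th - g p tt + gm).

Local Notation path al th W k :=
  (inner_path phi r gamma al tt gm th [seq W i | i <- enum 'I_k]).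

Lemma inner_path_drift (al a B : R) (V h : 'cV[R]_d -> R) :
  (forall th, 0 <= V th) ->
  (forall th, Ew w (fun p => V (svrg_step al p th)) <= V th - a * h th + B) ->
  forall k th, a * Ewn w (fun W : {ffun 'I_k -> S * S} =>
                            \sum_(t < k) h (nth 0 (path al th W k) t))
               <= V th + k%:R * B.
Proof.
move=> V_ge0 drift; elim=> [|k IH] th.
  rewrite (eq_Ewn (fun _ => 0)) => [|W]; last by rewrite big_ord0.
  by rewrite (Ewn_const wpair_sum1) mulr0 mul0r addr0.
have peel : Ewn w (fun W : {ffun 'I_k.+1 -> S * S} =>
                     \sum_(t < k.+1) h (nth 0 (path al th W k.+1) t))
  = Ew w (fun p => h th + Ewn w (fun W : {ffun 'I_k -> S * S} =>
                     \sum_(t < k) h (nth 0 (path al (svrg_step al p th) W k) t))).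
  rewrite (@Ewn_cons _ _ w k
            (fun ws => \sum_(t < k.+1) h (nth 0 (inner_path phi r gamma al tt gm th ws) t))).
  apply: eq_Ew => p; rewrite -[h th](Ewn_const wpair_sum1 k) -EwnD.
  by apply: eq_Ewn => W; rewrite big_ord_recl.
have step_le p : a * (h th + Ewn w (fun W : {ffun 'I_k -> S * S} =>
                     \sum_(t < k) h (nth 0 (path al (svrg_step al p th) W k) t)))
    <= a * h th + (V (svrg_step al p th) + k%:R * B).
  by rewrite mulrDr lerD2l IH.
rewrite peel -EwZ; apply: le_trans (Ew_le wpair_ge0 step_le) _.
rewrite !EwD (Ew_const wpair_sum1) (Ew_const wpair_sum1).
by have := drift th; rewrite -natr1; lra.
Qed.

(* Squared error of the batch estimate gm of the mean update -A(tt - theta_star). *)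
Definition est_err : R := dotv (gm + A *m (tt - ths)) (gm + A *m (tt - ths)).

Definition svrg_dir (p : S * S) (x xt : 'cV[R]_d) : 'cV[R]_d :=
  gTD_lin p x - gTD_lin p xt + gm.

Lemma svrg_step_centered al p th :
  svrg_step al p th - ths = (th - ths) + al *: svrg_dir p (th - ths) (tt - ths).
Proof.
rewrite /svrg_step /svrg_dir !gTD_linB !gTD_split.
have -> : gTD_lin p th - gTD_lin p ths - (gTD_lin p tt - gTD_lin p ths)
        = gTD_lin p th - gTD_lin p tt by rewrite opprB addrA subrK.
by rewrite opprD addrACA subrr add0r addrAC.
Qed.

Lemma Ew_svrg_cross x xt :
  Ew w (fun p => dotv x (svrg_dir p x xt)) = - dotv x (A *m x) + dotv x (gm + A *m xt).
Proof.
rewrite (eq_Ew (fun p => dotv x (gTD_lin p x) - dotv x (gTD_lin p xt) + dotv x gm)).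
  by rewrite EwD EwB (Ew_const wpair_sum1) !Ew_dotv_mean !mean_gTD_lin !dotvNr dotvDr; ring.
by move=> p; rewrite /svrg_dir dotvDr dotvBr.
Qed.

Lemma Ew_svrg_sq x xt :
  Ew w (fun p => dotv (svrg_dir p x xt) (svrg_dir p x xt))
  <= 4 * dotv x (A *m x) + 4 * dotv xt (A *m xt) + 2 * dotv (gm + A *m xt) (gm + A *m xt).
Proof.
have split_le p : dotv (svrg_dir p x xt) (svrg_dir p x xt)
    <= 2 * dotv (gTD_lin p x) (gTD_lin p x) + 2 * dotv (gm - gTD_lin p xt) (gm - gTD_lin p xt).
  by rewrite /svrg_dir -addrA [- _ + _]addrC; apply: dotv_add_le.
apply: le_trans (Ew_le wpair_ge0 split_le) _; rewrite EwD !EwZ.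
have gm_part : Ew w (fun p => dotv (gm - gTD_lin p xt) (gm - gTD_lin p xt))
    = dotv gm gm + 2 * dotv gm (A *m xt) + Ew w (fun p => dotv (gTD_lin p xt) (gTD_lin p xt)).
  rewrite (eq_Ew (fun p => dotv gm gm - 2 * dotv gm (gTD_lin p xt)
                                + dotv (gTD_lin p xt) (gTD_lin p xt))); last first.
    by move=> p; rewrite !dotvBl !dotvBr (dotvC (gTD_lin p xt)); ring.
  by rewrite EwD EwB (Ew_const wpair_sum1) EwZ Ew_dotv_mean mean_gTD_lin dotvNr; ring.
have gm_le : dotv gm gm + 2 * dotv gm (A *m xt) <= dotv (gm + A *m xt) (gm + A *m xt).
  by rewrite !dotvDl !dotvDr (dotvC (A *m xt)); have := dotv_ge0 (A *m xt); lra.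
have := gTD_lin_sq x; have := gTD_lin_sq xt; rewrite gm_part; lra.
Qed.

Definition drift_const : R := f tt / 64 + lam^-1 * est_err / 8 + est_err / 128.

Lemma svrg_drift th :
  Ew w (fun p => dotv (svrg_step (1 / 16) p th - ths) (svrg_step (1 / 16) p th - ths))
  <= dotv (th - ths) (th - ths) - 5 / 64 * f th + drift_const.
Proof.
set x := th - ths; set xt := tt - ths.
rewrite (eq_Ew (fun p => dotv x x + 2 * (1 / 16) * dotv x (svrg_dir p x xt)
                         + (1 / 16) ^+ 2 * dotv (svrg_dir p x xt) (svrg_dir p x xt))); last first.
  by move=> p; rewrite svrg_step_centered dotv_expand.
rewrite !EwD (Ew_const wpair_sum1) !EwZ Ew_svrg_cross.
have sq := Ew_svrg_sq x xt; rewrite -!f_eE -/xt -/est_err in sq.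
have young : 2 * dotv x (gm + A *m xt) <= 1 / 2 * (lam * dotv x x) + 2 * (lam^-1 * est_err).
  have -> : 1 / 2 * (lam * dotv x x) + 2 * (lam^-1 * est_err)
      = lam / 2 * dotv x x + (lam / 2)^-1 * dotv (gm + A *m xt) (gm + A *m xt).
    by rewrite /est_err -/xt invf_div; ring.
  exact: dotv_young (divr_gt0 lam_gt0 (ltr0n R 2)).
have lx : lam * dotv x x <= f th by rewrite f_eE; apply: dotv_A_lbound.
rewrite -f_eE /drift_const.
set Q1 := lam * dotv x x in young lx; set Q2 := lam^-1 * est_err in young *.
set E := Ew _ _ in sq *; lra.
Qed.

Lemma inner_loop_bound (M : nat) : M%:R = 32 / lam ->
  Ewn w (fun W : {ffun 'I_M -> S * S} =>
           M%:R^-1 * \sum_(t < M) f (nth 0 (path (1 / 16) tt W M) t))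
  <= 3 / 5 * f tt + (8 / 5 * lam^-1 + 1 / 10) * est_err.
Proof.
(* Multiply the summed drift by 1/M = lam/32 and use lam |tt - ths|^2 <= f(tt). *)
move=> HM; rewrite EwnZ HM invf_div.
have drift := inner_path_drift (a := 5 / 64) (B := drift_const)
   (fun th => dotv_ge0 (th - ths)) svrg_drift M tt.
set E := Ewn _ _ in drift *.
have scaled := ler_wpM2l (divr_ge0 (ltW lam_gt0) (ler0n R 32)) drift.
have unscale : lam / 32 * (dotv (tt - ths) (tt - ths) + M%:R * drift_const)
    = lam * dotv (tt - ths) (tt - ths) / 32 + drift_const.
  by rewrite HM; field; rewrite gt_eqF.
rewrite unscale in scaled.
have lxt : lam * dotv (tt - ths) (tt - ths) <= f tt by rewrite f_eE; apply: dotv_A_lbound.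
move: scaled; rewrite /drift_const.
set N := lam * dotv _ _ in lxt *; set Q := lam^-1 * est_err.
have -> : (8 / 5 * lam^-1 + 1 / 10) * est_err = 8 / 5 * Q + est_err / 10 by rewrite /Q; ring.
set LE := lam / 32 * E; have -> : lam / 32 * (5 / 64 * E) = 5 / 64 * LE by rewrite /LE; ring.
lra.
Qed.

End InnerLoop.

Lemma gTD_second_moment tt :
  Ew w (fun p => dotv (g p tt) (g p tt)) <= 2 * sigma2 P mu phi r gamma + 4 * f tt.
Proof.
have split_le p : dotv (g p tt) (g p tt)
    <= 2 * dotv (g p ths) (g p ths) + 2 * dotv (gTD_lin p (tt - ths)) (gTD_lin p (tt - ths)).
  have decomp : g p tt = g p ths + gTD_lin p (tt - ths).
    by rewrite gTD_linB !gTD_split addrACA subrr addr0.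
  by rewrite decomp; apply: dotv_add_le.
apply: le_trans (Ew_le wpair_ge0 split_le) _; rewrite EwD !EwZ.
have -> : Ew w (fun p => dotv (g p ths) (g p ths)) = sigma2 P mu phi r gamma.
  by rewrite /Ew sum_pair; apply: eq_bigr => s _; apply: eq_bigr => s' _.
by have := gTD_lin_sq (tt - ths); rewrite -f_eE; lra.
Qed.

Lemma batch_est_err tt n (D0 : R) : 0 < D0 ->
  4 * f tt + 2 * sigma2 P mu phi r gamma <= n%:R * D0 ->
  Ewn w (fun D : {ffun 'I_n -> S * S} => est_err tt (n%:R^-1 *: \sum_i g (D i) tt)) <= D0.
Proof.
move=> D0_gt0 nD0.
have second := gTD_second_moment tt.
have err_mean : est_err tt 0 = dotv (vmean w (g^~ tt)) (vmean w (g^~ tt)).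
  by rewrite /est_err add0r mean_gTD dotvNl dotvNr opprK.
case: n nD0 => [|n] nD0.
  rewrite (eq_Ewn (fun _ => est_err tt 0)) => [|D]; last by rewrite big_ord0 scaler0.
  rewrite (Ewn_const wpair_sum1) err_mean.
  by have := dotv_mean_le wpair_ge0 wpair_sum1 (g^~ tt); rewrite mul0r in nD0; lra.
pose z p := g p tt - vmean w (g^~ tt).
rewrite (eq_Ewn (fun D : {ffun 'I_n.+1 -> S * S} =>
          dotv (n.+1%:R^-1 *: \sum_i z (D i)) (n.+1%:R^-1 *: \sum_i z (D i)))) => [|D].
  rewrite (Ewn_iid_mean wpair_sum1) ?(vmean_center wpair_sum1) // (Ew_variance wpair_sum1).
  have := dotv_ge0 (vmean w (g^~ tt)); rewrite ler_pdivrMl ?ltr0Sn //; lra.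
rewrite /z sumrB scalerBr sumr_const card_ord -scaler_nat scalerA mulVf ?pnatr_eq0 //.
by rewrite scale1r /est_err mean_gTD opprK.
Qed.

Lemma epoch_bound (M n : nat) tt (D0 : R) : M%:R = 32 / lam -> 0 < D0 ->
  4 * f tt + 2 * sigma2 P mu phi r gamma <= n%:R * D0 ->
  epochE P mu phi r gamma (1 / 16) M n tt f <= 3 / 5 * f tt + (8 / 5 * lam^-1 + 1 / 10) * D0.
Proof.
move=> HM D0_gt0 nD0; set K := 8 / 5 * lam^-1 + 1 / 10.
have K_ge0 : 0 <= K by rewrite /K addr_ge0 ?mulr_ge0 ?invr_ge0 ?ltW.
apply: (le_trans (y := Ewn w (fun D : {ffun 'I_n -> S * S} =>
    3 / 5 * f tt + K * est_err tt (n%:R^-1 *: \sum_i g (D i) tt)))).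
  by apply: (Ewn_le wpair_ge0) => D; apply: inner_loop_bound.
rewrite EwnD (Ewn_const wpair_sum1) EwnZ lerD2l ler_wpM2l //.
exact: batch_est_err.
Qed.

Lemma epochE_le al M n tt (h1 h2 : 'cV[R]_d -> R) : (forall x, h1 x <= h2 x) ->
  epochE P mu phi r gamma al M n tt h1 <= epochE P mu phi r gamma al M n tt h2.
Proof.
move=> h12; apply: (Ewn_le wpair_ge0) => D /=; apply: (Ewn_le wpair_ge0) => W.
by rewrite ler_wpM2l ?invr_ge0 ?ler0n //; apply: ler_sum => t _.
Qed.

Lemma epochE_affine al M n tt (h : 'cV[R]_d -> R) a b : (0 < M)%N ->
  epochE P mu phi r gamma al M n tt (fun x => a * h x + b)
  = a * epochE P mu phi r gamma al M n tt h + b.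
Proof.
move=> M_gt0; rewrite -[in RHS](Ewn_const wpair_sum1 n b) -EwnZ -EwnD.
apply: eq_Ewn => D /=; rewrite -[in RHS](Ewn_const wpair_sum1 M b) -EwnZ -EwnD.
apply: eq_Ewn => W; rewrite big_split /= -mulr_sumr sumr_const card_ord -mulr_natr.
by field; rewrite pnatr_eq0 -lt0n.
Qed.

Lemma expect_epochs_le al M nb m th0 (h1 h2 : 'cV[R]_d -> R) :
  (forall x, h1 x <= h2 x) ->
  expect_epochs P mu phi r gamma al M nb m th0 h1
  <= expect_epochs P mu phi r gamma al M nb m th0 h2.
Proof.
elim: m h1 h2 => [|m IH] h1 h2 h12 //=.
by apply: IH => x; apply: epochE_le.
Qed.

Lemma eq_expect_epochs al M nb m th0 (h1 h2 : 'cV[R]_d -> R) : h1 =1 h2 ->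
  expect_epochs P mu phi r gamma al M nb m th0 h1
  = expect_epochs P mu phi r gamma al M nb m th0 h2.
Proof. by move=> h12; apply/le_anti/andP; split; apply: expect_epochs_le => x; rewrite h12. Qed.

Lemma expect_epochs_affine al M nb m th0 (h : 'cV[R]_d -> R) a b : (0 < M)%N ->
  expect_epochs P mu phi r gamma al M nb m th0 (fun x => a * h x + b)
  = a * expect_epochs P mu phi r gamma al M nb m th0 h + b.
Proof.
move=> M_gt0; elim: m h a b => [|m IH] h a b //=; rewrite -IH.
by apply: eq_expect_epochs => x; apply: epochE_affine.
Qed.

Lemma expect_epochs_step al M nb m th0 (h : 'cV[R]_d -> R) (rho bm : R) : (0 < M)%N ->
  (forall th, epochE P mu phi r gamma al M (nb m.+1 th) th h <= rho * h th + bm) ->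
  expect_epochs P mu phi r gamma al M nb m.+1 th0 h
  <= rho * expect_epochs P mu phi r gamma al M nb m th0 h + bm.
Proof. by move=> M_gt0 epoch /=; rewrite -expect_epochs_affine //; apply: expect_epochs_le. Qed.

End TDSVRGAnalysis.

Lemma geometric_recursion (R : realFieldType) (Y : nat -> R) (rho q K : R) :
  0 <= rho -> rho < q -> 0 <= K -> 0 <= Y 0%N ->
  (forall m, Y m.+1 <= rho * Y m + K * q ^+ m.+1) ->
  forall m, Y m <= q ^+ m * (Y 0%N + K * q / (q - rho)).
Proof.
move=> rho_ge0 rho_q K_ge0 Y0 rec; have q_gt0 : 0 < q by apply: le_lt_trans rho_q.
have qr_gt0 : 0 < q - rho by rewrite subr_gt0.
elim=> [|m IH].
  rewrite expr0 mul1r lerDl; apply: divr_ge0; last exact: ltW.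
  by apply: mulr_ge0 => //; apply: ltW.
set C := Y 0%N + _ in IH *.
have key : rho * (q ^+ m * C) + K * q ^+ m.+1 = q ^+ m.+1 * C - q ^+ m * (q - rho) * Y 0%N.
  by rewrite /C exprS; field; rewrite gt_eqF.
apply: le_trans (rec m) _; apply: (le_trans (y := rho * (q ^+ m * C) + K * q ^+ m.+1)).
  by rewrite lerD2r ler_wpM2l.
rewrite key lerBlDr lerDl; apply: mulr_ge0 => //.
by apply: mulr_ge0; [exact: exprn_ge0 (ltW q_gt0) | exact: ltW].
Qed.

Lemma ceil_batch_size (R : archiRealFieldType) (x D0 : R) : 0 < D0 ->
  x <= (`|Num.ceil (x / D0)|%N)%:R * D0.
Proof.
move=> D0_gt0; rewrite -ler_pdivrMr // natr_absz.
by apply: le_trans (Num.Theory.ceil_ge _) _; rewrite ler_int ler_norm.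
Qed.

Theorem theorem2 (R : realType) (S : finType) (d : nat)
  (P : S -> S -> R) (mu : S -> R) (phi : S -> 'cV[R]_d) (r : S -> S -> R)
  (gamma : R) (lamA c : R) (M : nat) (th0 : 'cV[R]_d) :
  stochastic P -> irreducible P -> aperiodic P -> stationary P mu ->
  (forall s, dotv (phi s) (phi s) <= 1) ->
  0 <= gamma -> gamma < 1 ->
  A_e P mu phi gamma \in unitmx ->
  is_min_eigenvalue ((1 / 2 : R) *: (A_e P mu phi gamma + (A_e P mu phi gamma)^T)) lamA ->
  0 < lamA ->
  M%:R = 32 / lamA ->
  0 < c ->
  let fe := f_e P mu phi r gamma in
  let nb := fun (m : nat) (th : 'cV[R]_d) =>
    `|Num.ceil ((4 * fe th + 2 * sigma2 P mu phi r gamma)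
                 / (c * lamA * (2 / 3) ^+ m))|%N in
  exists C1 : R, forall m : nat,
    expect_epochs P mu phi r gamma (1 / 16) M nb m th0 fe
      <= (2 / 3) ^+ m * (fe th0 + C1).
Proof.
move=> Hst _ _ Hstat Hphi Hg0 Hg1 HAu Hlam Hlam0 HM c_gt0 fe nb.
have M_gt0 : (0 < M)%N by rewrite -(ltr0n R) HM divr_gt0.
have q_gt0 : (0 : R) < 2 / 3 by lra.
pose K := (8 / 5 * lamA^-1 + 1 / 10) * (c * lamA).
have K_ge0 : 0 <= K.
  have lamV_gt0 : 0 < lamA^-1 by rewrite invr_gt0.
  by rewrite /K mulr_ge0 ?mulr_ge0 ?ltW //; lra.
(* Epoch m uses error level D0 = c lamA (2/3)^m, hence contracts by 3/5. *)
have epoch m th : epochE P mu phi r gamma (1 / 16) M (nb m th) th fe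
    <= 3 / 5 * fe th + K * (2 / 3) ^+ m.
  have D0_gt0 : 0 < c * lamA * (2 / 3) ^+ m by rewrite !mulr_gt0 // exprn_gt0.
  apply: le_trans (epoch_bound Hst Hstat HAu Hphi Hg0 Hg1 Hlam Hlam0 HM D0_gt0
                     (ceil_batch_size _ D0_gt0)) _.
  by rewrite /K !mulrA.
exists (K * (2 / 3) / (2 / 3 - 3 / 5)).
apply: (geometric_recursion (Y := fun m => expect_epochs P mu phi r gamma (1 / 16) M nb m th0 fe)).
- by lra.
- by lra.
- exact: K_ge0.
- exact: f_e_ge0 Hlam Hlam0 th0.
- by move=> m; apply: expect_epochs_step => // th; apply: epoch.
Qed.
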